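(* Let $p$ be an odd prime and $\lambda$ a nonempty BG-partition. The following are equivalent: (1) $\varepsilon^*_\lambda=0$; (2) $a^*_\lambda$ is even; (3) $\mathrm{Rim}^*_p(\lambda)$ contains no diagonal node $(i,i)$; (4) $p\mid a^*_\lambda$.
   Context: Partitions: $\lambda=(\lambda_1\ge\lambda_2\ge\cdots)$ with finitely many nonzero parts; $l(\lambda)$ = number of nonzero parts; Young diagram $[\lambda]=\{(i,j): i\ge1, 1\le j\le\lambda_i\}$ ($i$ = row, increasing downward). $\lambda'$ is the conjugate; self-conjugate means $\lambda=\lambda'$. $k(\lambda)=\max\{i:\lambda_i\ge i\}$; diagonal nodes are $(i,i)$, $1\le i\le k(\lambda)$; hook length $h_{ij}=\lambda_i+\lambda'_j-i-j+1$. A BG-partition is a self-conjugate partition with $p\nmid h_{ii}$ for all $1\le i\le k(\lambda)$. Rim and $p$-rim: the rim is the set of nodes $(i,j)\in[\lambda]$ with $(i+1,j+1)\notin[\lambda]$. Label rim nodes $1,2,\dots$ along the rim path from $(1,\lambda_1)$ to $(l(\lambda),1)$. The first $p$-segment is the rim nodes labelled $1,\dots,p$ (or all if fewer). If the last node $(i,j)$ of a $p$-segment lies in the last row, stop; otherwise with $l$ the smallest label in row $i+1$ the next $p$-segment is the rim nodes labelled $l,\dots,l+p-1$ (or up to the last). The $p$-rim is the union of the $p$-segments. $p$-rim*: $U_\lambda=\{(i,j)\in p\text{-rim of }\lambda: i\le j\}$, $L_\lambda=\{(j,i):(i,j)\in U_\lambda\}$, $\mathrm{Rim}^*_p(\lambda)=U_\lambda\cup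 L_\lambda$, $a^*_\lambda=\#\mathrm{Rim}^*_p(\lambda)$, $\varepsilon^*_\lambda=a^*_\lambda\bmod 2$. *)

(* Partitions as nonincreasing sequences of positive nats;
   lambda_i = nth 0 s i.-1 (rows are 1-indexed); nodes are pairs (i, j). *)
From mathcomp Require Import all_boot.
Set Implicit Arguments. Unset Strict Implicit. Unset Printing Implicit Defensive.

Definition node := (nat * nat)%type.

Definition is_partition (s : seq nat) : bool :=
  sorted geq s && all (fun x => 0 < x) s.

Definition part (s : seq nat) (i : nat) : nat := nth 0 s i.-1.

Definition len (s : seq nat) : nat := size s.

Definition in_diag (s : seq nat) (x : node) : bool :=
  [&& 1 <= x.1, 1 <= x.2 & x.2 <= part s x.1].

Definition conjugate (s : seq nat) : seq nat :=
  mkseq (fun j => count (fun x => j.+1 <= x) s) (head 0 s).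

Definition self_conjugate (s : seq nat) : bool := conjugate s == s.

Definition kdiag (s : seq nat) : nat :=
  \max_(i < size s | i.+1 <= part s i.+1) i.+1.

Definition hook (s : seq nat) (i j : nat) : nat :=
  part s i + part (conjugate s) j + 1 - i - j.

Definition BG_partition (p : nat) (s : seq nat) : bool :=
  [&& is_partition s, self_conjugate s &
      all (fun i => ~~ (p %| hook s i i)) (iota 1 (kdiag s))].

Definition is_rim (s : seq nat) (x : node) : bool :=
  in_diag s x && ~~ in_diag s (x.1.+1, x.2.+1).

(* all nodes of [lambda], listed row by row (top to bottom), each row from
   right to left; the rim nodes in this order are exactly the rim path from
   (1, lambda_1) to (l(lambda), 1). *)
Definition diag_nodes (s : seq nat) : seq node :=
  flatten [seq [seq (i, j) | j <- rev (iota 1 (part s i))] | i <- iota 1 (len s)].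

(* rim nodes in path order: label t+1 is the t-th entry (0-based) *)
Definition rim_seq (s : seq nat) : seq node := filter (is_rim s) (diag_nodes s).

Fixpoint psegs (p : nat) (s : seq nat) (fuel st : nat) : seq node :=
  match fuel with
  | 0 => [::]
  | f.+1 =>
      let rs := rim_seq s in
      let seg := take p (drop st rs) in
      if seg == [::] then [::] else
      let i := (last (0, 0) seg).1 in
      if i == len s then seg
      else seg ++ psegs p s f (find (fun x : node => x.1 == i.+1) rs)
  end.

Definition prim (p : nat) (s : seq nat) : seq node :=
  psegs p s (size (rim_seq s)).+1 0.

Definition U_set (p : nat) (s : seq nat) : seq node :=
  [seq x <- prim p s | x.1 <= x.2].

Definition L_set (p : nat) (s : seq nat) : seq node :=
  [seq (x.2, x.1) | x <- U_set p s].

Definition rim_star (p : nat) (s : seq nat) : seq node :=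
  undup (U_set p s ++ L_set p s).

Definition a_star (p : nat) (s : seq nat) : nat := size (rim_star p s).

Definition eps_star (p : nat) (s : seq nat) : nat := a_star p s %% 2.

(* The rim nodes on or above the diagonal form an initial segment of the rim path which
   ends at (k, k), the only diagonal rim node; its part from the first rim node of a row
   r <= k onwards has exactly lambda_r - r + 1 nodes.  Hence a p-segment starting in row
   r <= k either lies above the diagonal and contains p of its nodes, or contains (k, k)
   together with lambda_r - r + 1 of them and is followed by nodes below the diagonal only.
   So |U| = [(k, k) in p-rim] (lambda_r - r + 1) + p m for some r <= k, and as U and L meet
   at most in (k, k), a* = 2 |U| - [(k, k) in p-rim] = [(k, k) in p-rim] h_rr + 2 p m,
   where h_rr = 2 (lambda_r - r) + 1 is odd and, lambda being a BG-partition, prime to p. *)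

From mathcomp Require Import all_boot zify.
Set Implicit Arguments. Unset Strict Implicit. Unset Printing Implicit Defensive.

Section Partition.

Variable s : seq nat.
Hypothesis s_partition : is_partition s.
Local Notation k := (kdiag s).

Lemma leq_part i j : i <= j -> part s j <= part s i.
Proof.
move=> le_ij; rewrite /part.
have [lt_j|] := ltnP j.-1 (size s); last by move=> /(nth_default 0) ->.
case/andP: s_partition => sorted_s _.
by apply: (sorted_leq_nth (rev_trans leq_trans) leqnn 0 sorted_s); rewrite ?inE; lia.
Qed.

Lemma part_gt0 i : 0 < i <= size s -> 0 < part s i.
Proof.
case/andP=> i_gt0 le_i; case/andP: s_partition => _ /allP; apply.
by apply: mem_nth; rewrite prednK.
Qed.

Lemma part_gt0_size i : 0 < part s i -> i.-1 < size s.
Proof. by rewrite /part => pos; rewrite ltnNge; apply: contraL pos => /(nth_default 0) ->. Qed.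

Hypothesis s_nonempty : 0 < size s.

Lemma leq_kdiag i : 0 < i <= part s i -> i <= k.
Proof.
case/andP=> i_gt0 le_i.
have lt_i : i.-1 < size s by apply: part_gt0_size; lia.
have := @leq_bigmax_cond _ (fun j : 'I_(size s) => j.+1 <= part s j.+1)
  (fun j : 'I_(size s) => j.+1) (Ordinal lt_i).
by rewrite /kdiag /= prednK //; apply.
Qed.

Lemma kdiag_spec : 0 < k <= part s k.
Proof.
have : 0 < #|[pred j : 'I_(size s) | j.+1 <= part s j.+1]|.
  apply/card_gt0P; exists (Ordinal s_nonempty); rewrite inE /=.
  by apply: part_gt0; rewrite s_nonempty.
move=> /(eq_bigmax_cond (fun j : 'I_(size s) => j.+1)) [j le_j eq_k].
by have -> : k = j.+1 by rewrite /kdiag -eq_k.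
Qed.

Lemma kdiag_le_part i : i <= k -> k <= part s i.
Proof. by move=> le_ik; case/andP: kdiag_spec => _ /leq_trans; apply; apply: leq_part. Qed.

Lemma part_lt_above_kdiag i : k < i -> part s i < i.
Proof. by move=> lt_ki; rewrite ltnNge; apply/negP => le_i; have := @leq_kdiag i; lia. Qed.

Lemma kdiag_le_size : k <= size s.
Proof. by case/andP: kdiag_spec => k_gt0 /(leq_trans k_gt0) /part_gt0_size; lia. Qed.

End Partition.

Lemma hook_diag (s : seq nat) i :
  self_conjugate s -> i <= part s i -> hook s i i = (part s i - i).*2.+1.
Proof. by rewrite /hook => /eqP ->; lia. Qed.

Definition node_lt (x y : node) : bool :=
  (x.1 < y.1) || ((x.1 == y.1) && (y.2 < x.2)).

Lemma node_lt_irr : irreflexive node_lt.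
Proof. by move=> x; rewrite /node_lt ltnn eqxx ltnn. Qed.

Lemma node_lt_trans : transitive node_lt.
Proof. by move=> y x z; rewrite /node_lt; lia. Qed.

Lemma node_lt_row x y : node_lt x y -> x.1 <= y.1.
Proof. by rewrite /node_lt; lia. Qed.

Lemma pairwise_node_lt_rows (f : nat -> nat) a n :
  pairwise node_lt
    (flatten [seq [seq (i, j) | j <- rev (iota 1 (f i))] | i <- iota a n]).
Proof.
elim: n a => [|n IHn] a //=; rewrite pairwise_cat IHn andbT; apply/andP; split.
  apply/allrelP => x y /mapP[j _ ->] /flattenP[t /mapP[i]].
  by rewrite mem_iota /node_lt => /andP[lt_ai _] -> /mapP[j' _ ->] /=; rewrite lt_ai.
rewrite pairwise_map; apply: (@sub_pairwise _ [rel j j' | j' < j]).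
  by move=> j j' /= lt_j'j; rewrite /node_lt /= eqxx lt_j'j orbT.
by rewrite -(sorted_pairwise (rev_trans ltn_trans)) rev_sorted iota_ltn_sorted.
Qed.

Lemma pairwise_last_row (t : seq node) (x0 x : node) :
  pairwise node_lt t -> x \in t -> x.1 <= (last x0 t).1.
Proof.
case/lastP: t => // t y; rewrite last_rcons mem_rcons inE => + /predU1P[-> //|x_t].
rewrite -cats1 pairwise_cat => /and3P[/allrelP lt_ty _ _].
by apply/node_lt_row/lt_ty; rewrite ?inE.
Qed.

Lemma pairwise_filter_cat_predC (T : eqType) (r : rel T) (a : pred T) (t : seq T) :
  pairwise r t -> {in t &, forall x y, r x y -> a y -> a x} ->
  t = filter a t ++ filter (predC a) t.
Proof.
elim: t => //= x t IHt /andP[r_x r_t] closed.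
have closed_t : {in t &, forall y z, r y z -> a z -> a y}.
  by move=> y z y_t z_t; apply: closed; rewrite inE ?y_t ?z_t orbT.
case a_x: (a x) => /=; first by rewrite -IHt.
have not_a_t : all (predC a) t.
  apply/allP => y y_t /=; apply: contraFN a_x => a_y.
  by apply: (closed x y); rewrite ?inE ?eqxx ?y_t ?orbT ?(allP r_x).
by move: (not_a_t); rewrite (all_filterP not_a_t) all_predC has_filter negbK => /eqP->.
Qed.

Lemma pairwise_max_rcons (T : eqType) (r : rel T) (t : seq T) (m : T) :
  irreflexive r -> transitive r -> pairwise r t -> m \in t ->
  {in t, forall x, x != m -> r x m} -> exists t', t = rcons t' m.
Proof.
move=> irr_r trans_r r_t m_t below_m.
case/splitPr: m_t r_t below_m => t1 [|y t2] r_t below_m.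
  by exists t1; rewrite cats1.
move: r_t; rewrite pairwise_cat /= => /and3P[_ _ /andP[/andP[r_my _] _]].
have y_neq_m : y != m by apply: contraTneq r_my => ->; rewrite irr_r.
have := below_m y; rewrite mem_cat !inE eqxx !orbT => /(_ isT y_neq_m) r_ym.
by have := trans_r _ _ _ r_my r_ym; rewrite irr_r.
Qed.

Definition upper (x : node) : bool := x.1 <= x.2.

Section Rim.

Variable s : seq nat.
Hypothesis s_partition : is_partition s.
Local Notation k := (kdiag s).
Local Notation rs := (rim_seq s).

Lemma rim_seq_pairwise : pairwise node_lt rs.
Proof. exact/pairwise_filter/pairwise_node_lt_rows. Qed.

Lemma rim_seq_uniq : uniq rs.
Proof. exact: pairwise_uniq node_lt_irr rim_seq_pairwise. Qed.

Lemma pairwise_take_drop_rim m n : pairwise node_lt (take n (drop m rs)).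
Proof.
exact: subseq_pairwise (subseq_trans (take_subseq _ _) (drop_subseq _ _)) rim_seq_pairwise.
Qed.

Lemma mem_rim_seq (x : node) : (x \in rs) = is_rim s x.
Proof.
rewrite mem_filter andb_idr // => /andP[/and3P[]]; case: x => i j /= i_gt0 j_gt0 le_j _.
apply/flattenP; exists [seq (i, j) | j <- rev (iota 1 (part s i))].
  apply/mapP; exists i => //; rewrite mem_iota /len.
  by have := part_gt0_size (leq_trans j_gt0 le_j); lia.
by apply/mapP; exists j; rewrite // mem_rev mem_iota; lia.
Qed.

Lemma rim_row_gt0 (x : node) : x \in rs -> 0 < x.1.
Proof. by rewrite mem_rim_seq => /andP[/and3P[]]. Qed.

Lemma rim_row_homo (x0 : node) a b :
  a <= b -> b < size rs -> (nth x0 rs a).1 <= (nth x0 rs b).1.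
Proof.
rewrite leq_eqVlt => /orP[/eqP-> //|lt_ab lt_b]; apply: node_lt_row.
by apply: (pairwiseP x0 rim_seq_pairwise); rewrite ?inE //; apply: ltn_trans lt_b.
Qed.

Lemma row_end_in_rim r : 0 < r <= size s -> (r, part s r) \in rs.
Proof.
move=> r_range; have := part_gt0 s_partition r_range.
have := leq_part s_partition (leqnSn r).
by rewrite mem_rim_seq /is_rim /in_diag /=; lia.
Qed.

Lemma count_upper_rim_row r : 0 < r ->
  count [pred x : node | upper x && (x.1 == r)] rs = (part s r).+1 - maxn r (part s r.+1).
Proof.
move=> r_gt0; set lo := maxn r _; rewrite -size_filter.
transitivity (size [seq (r, j) | j <- iota lo ((part s r).+1 - lo)]).
  2: by rewrite size_map size_iota.
apply: perm_size; apply: uniq_perm; first exact: filter_uniq rim_seq_uniq.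
  by rewrite map_inj_uniq ?iota_uniq // => j j' [].
move=> [i j]; rewrite mem_filter mem_rim_seq /=.
have [->|ne_ir] := eqVneq i r; last first.
  by rewrite andbF; apply/esym/mapP => -[j' _ [eq_ir _]]; rewrite eq_ir eqxx in ne_ir.
rewrite mem_map; last by move=> j1 j2 [].
by rewrite mem_iota /is_rim /in_diag /upper /= /lo; lia.
Qed.

Hypothesis s_nonempty : 0 < size s.

Lemma upper_rim_row (x : node) : x \in rs -> upper x -> x.1 <= k.
Proof.
rewrite mem_rim_seq => /andP[/and3P[row_gt0 _ le_col] _] up_x.
by apply: leq_kdiag => //; rewrite row_gt0 (leq_trans up_x le_col).
Qed.

Lemma rim_upper_closed (x y : node) :
  x \in rs -> y \in rs -> node_lt x y -> upper y -> upper x.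
Proof.
move=> + y_rim + up_y; have le_yk := upper_rim_row y_rim up_y.
rewrite mem_rim_seq /upper => /andP[_]; rewrite /in_diag /= => not_below.
case/orP=> [lt_xy|/andP[/eqP eq_xy lt_y]]; last by move: up_y; rewrite /upper; lia.
by have := kdiag_le_part s_partition s_nonempty (leq_trans lt_xy le_yk); lia.
Qed.

Lemma diag_in_rim : (k, k) \in rs.
Proof.
have /andP[k_gt0 le_k] := kdiag_spec s_partition s_nonempty.
have := part_lt_above_kdiag s_partition s_nonempty (ltnSn k).
by rewrite mem_rim_seq /is_rim /in_diag /=; lia.
Qed.

Lemma rim_diag (i : nat) : (i, i) \in rs -> i = k.
Proof.
move=> ii_rim; have le_ik := upper_rim_row ii_rim (leqnn i).
have := kdiag_le_part s_partition s_nonempty (i := i.+1).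
by move: ii_rim le_ik; rewrite mem_rim_seq /is_rim /in_diag /=; lia.
Qed.

Lemma count_upper_rim_from r : 0 < r <= k ->
  count [pred x : node | upper x && (r <= x.1)] rs = part s r - r + 1.
Proof.
have split_row i : count [pred x : node | upper x && (i <= x.1)] rs =
    count [pred x : node | upper x && (x.1 == i)] rs +
    count [pred x : node | upper x && (i < x.1)] rs.
  by elim: rs => //= x t ->; case: (upper x) => //=; case: ltngtP => _; lia.
have above_kdiag : count [pred x : node | upper x && (k < x.1)] rs = 0.
  rewrite (eq_in_count (a2 := pred0)) ?count_pred0 // => x x_rim /=.
  by apply/negP => /andP[/(upper_rim_row x_rim)]; rewrite ltnNge => ->.
move=> /andP[r_gt0 le_rk]; have [n lt_n] := ubnP (k - r).
elim: n r r_gt0 le_rk lt_n => // n IHn r r_gt0 le_rk lt_n.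
rewrite split_row count_upper_rim_row //.
have [lt_rk|ge_rk] := ltnP r k.
  have := kdiag_le_part s_partition s_nonempty lt_rk.
  by have := leq_part s_partition (leqnSn r); rewrite IHn //; lia.
have {ge_rk le_rk} -> : r = k by apply/eqP; rewrite eqn_leq le_rk.
have := part_lt_above_kdiag s_partition s_nonempty (ltnSn k).
by case/andP: (kdiag_spec s_partition s_nonempty) => _; rewrite above_kdiag; lia.
Qed.

End Rim.

Definition rim_upper (s : seq nat) : seq node := filter upper (rim_seq s).

Definition start (s : seq nat) (r : nat) : nat :=
  find (fun x : node => x.1 == r) (rim_seq s).

Section UpperRim.

Variable s : seq nat.
Hypothesis s_partition : is_partition s.
Hypothesis s_nonempty : 0 < size s.
Local Notation k := (kdiag s).
Local Notation rs := (rim_seq s).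

Lemma rim_seq_cat : rs = rim_upper s ++ filter (predC upper) rs.
Proof.
apply: pairwise_filter_cat_predC (rim_seq_pairwise s) _ => x y x_rim y_rim.
exact: (@rim_upper_closed s s_partition s_nonempty x y x_rim y_rim).
Qed.

Lemma rim_upper_rcons : exists t, rim_upper s = rcons t (k, k).
Proof.
apply: pairwise_max_rcons node_lt_irr node_lt_trans _ _ _.
- exact/pairwise_filter/rim_seq_pairwise.
- by rewrite mem_filter diag_in_rim // /upper leqnn.
move=> [i j]; rewrite mem_filter /upper /= => /andP[le_ij ij_rim] ne_ij.
have := upper_rim_row s_partition s_nonempty ij_rim le_ij.
by move: ne_ij; rewrite /node_lt /= xpair_eqE; lia.
Qed.

Lemma count_upper_drop_rim n : count upper (drop n rs) = size (rim_upper s) - n.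
Proof.
have count_lower m : count upper (drop m (filter (predC upper) rs)) = 0.
  rewrite (eq_in_count (a2 := pred0)) ?count_pred0 // => x /mem_drop.
  by rewrite mem_filter => /andP[/negbTE].
rewrite {1}rim_seq_cat drop_cat; case: ltnP => [_|le_n]; last by rewrite count_lower; lia.
rewrite count_cat -(drop0 (filter _ _)) count_lower addn0 -size_drop.
by apply/eqP; rewrite -all_count; apply/allP => x /mem_drop; rewrite mem_filter => /andP[].
Qed.

Lemma count_upper_take_drop m n :
  count upper (take n (drop m rs)) = minn n (size (rim_upper s) - m).
Proof.
have := count_cat upper (take n (drop m rs)) (drop n (drop m rs)).
by rewrite cat_take_drop drop_drop !count_upper_drop_rim; lia.
Qed.

Lemma mem_diag_take_drop m n : m < size (rim_upper s) ->
  ((k, k) \in take n (drop m rs)) = (size (rim_upper s) - m <= n).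
Proof.
have [t def_U] := rim_upper_rcons.
have diag_notin_t : (k, k) \notin t.
  have := filter_uniq upper (rim_seq_uniq s).
  by rewrite -/(rim_upper s) def_U rcons_uniq => /andP[].
rewrite def_U size_rcons ltnS => le_m.
rewrite {1}rim_seq_cat drop_cat def_U size_rcons ltnS le_m drop_rcons // cat_rcons.
rewrite in_take ?mem_cat ?inE ?eqxx ?orbT // index_pivot; last first.
  by apply: contra diag_notin_t; apply: mem_drop.
by rewrite size_drop subSn.
Qed.

Lemma nth_start_row r : 0 < r <= size s -> (nth (0, 0) rs (start s r)).1 = r.
Proof.
move=> /(row_end_in_rim s_partition) end_rim.
by apply/eqP/(nth_find _ (a := fun x : node => x.1 == r)); apply/hasP; exists (r, part s r).
Qed.

Lemma drop_start_row r (x : node) : x \in drop (start s r) rs -> r <= x.1.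
Proof.
move=> x_drop; have lt_start : start s r < size rs.
  by rewrite ltnNge; apply: contraL x_drop => /drop_oversize->.
have row_start : (nth (0, 0) rs (start s r)).1 = r.
  by apply/eqP/(nth_find _ (a := fun x : node => x.1 == r)); rewrite has_find.
have [i lt_i ->] : exists2 i, start s r + i < size rs & x = nth (0, 0) rs (start s r + i).
  exists (index x (drop (start s r) rs)); last by rewrite -nth_drop nth_index.
  by rewrite -ltn_subRL -size_drop index_mem.
by rewrite -{1}row_start rim_row_homo ?leq_addr.
Qed.

Lemma take_start_row r (x : node) : 0 < r <= size s -> x \in take (start s r) rs -> x.1 < r.
Proof.
move=> r_range x_take; have lt_start : start s r < size rs.
  by rewrite -has_find; apply/hasP; exists (r, part s r); rewrite ?row_end_in_rim.
have lt_index : index x (take (start s r) rs) < start s r.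
  by have := index_mem x (take (start s r) rs); rewrite x_take size_take lt_start.
have [i lt_i ->] : exists2 i, i < start s r & x = nth (0, 0) rs i.
  by exists (index x (take (start s r) rs)); rewrite // -(nth_take _ lt_index) nth_index.
rewrite ltn_neqAle (before_find _ lt_i) -[r in _ <= r](nth_start_row r_range).
by rewrite rim_row_homo // ltnW.
Qed.

Lemma start_one : start s 1 = 0.
Proof.
have <- : size (take (start s 1) rs) = start s 1.
  by rewrite size_take_min; apply/minn_idPl/find_size.
case E: (take _ _) => [//|x t].
have x_take : x \in take (start s 1) rs by rewrite E mem_head.
have := rim_row_gt0 s_partition (mem_take x_take).
by rewrite ltnNge -ltnS take_start_row ?s_nonempty.
Qed.

Lemma size_rim_upper r : 0 < r <= k -> size (rim_upper s) = start s r + (part s r - r + 1).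
Proof.
move=> r_range; have := count_upper_rim_from s_partition s_nonempty r_range.
have {}r_range : 0 < r <= size s.
  by have := kdiag_le_size s_partition s_nonempty; move: r_range; lia.
rewrite -(cat_take_drop (start s r) rs) count_cat.
rewrite (eq_in_count (a2 := pred0) (s := take _ _)) ?count_pred0; last first.
  by move=> x /(take_start_row r_range) /=; rewrite ltnNge => /negbTE->; rewrite andbF.
rewrite (eq_in_count (a2 := upper)); last by move=> x /drop_start_row /= ->; rewrite andbT.
by rewrite count_upper_drop_rim; lia.
Qed.

End UpperRim.

Section Segments.

Variables (p : nat) (s : seq nat).
Hypothesis s_partition : is_partition s.
Hypothesis s_nonempty : 0 < size s.
Local Notation k := (kdiag s).
Local Notation rs := (rim_seq s).

Lemma psegs_step f st : psegs p s f.+1 st =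
  let seg := take p (drop st rs) in
  if seg == [::] then [::] else
  if (last (0, 0) seg).1 == len s then seg
  else seg ++ psegs p s f (start s (last (0, 0) seg).1.+1).
Proof. by []. Qed.

Lemma mem_psegs f st x : x \in psegs p s f st -> x \in rs.
Proof.
elim: f st => [//|f IHf] st; rewrite psegs_step /=.
case: ifP => // _; case: ifP => [_ /mem_take /mem_drop //|_].
by rewrite mem_cat => /orP[/mem_take /mem_drop|/IHf].
Qed.

Lemma psegs_start_row f r (x : node) : x \in psegs p s f (start s r) -> r <= x.1.
Proof.
elim: f r => [//|f IHf] r; rewrite psegs_step /=.
set seg := take p _; case: ifP => // seg_nil.
case: ifP => [_ /mem_take /drop_start_row //|_].
rewrite mem_cat => /orP[/mem_take /drop_start_row //|/IHf].
have /mem_take /drop_start_row : last (0, 0) seg \in seg.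
  by case: (seg) seg_nil => //= y t _; apply: mem_last.
lia.
Qed.

Lemma psegs_uniq f r : uniq (psegs p s f (start s r)).
Proof.
elim: f r => [//|f IHf] r; rewrite psegs_step /=.
set seg := take p _; have seg_uniq : uniq seg by exact/take_uniq/drop_uniq/rim_seq_uniq.
case: ifP => // _; case: ifP => // _; rewrite cat_uniq seg_uniq IHf andbT /=.
apply/hasP => -[x /psegs_start_row later_x x_seg].
by have := pairwise_last_row (0, 0) (pairwise_take_drop_rim _ _ _) x_seg; rewrite leqNgt later_x.
Qed.

Lemma psegs_not_upper f r : k < r -> {in psegs p s f (start s r), forall x, ~~ upper x}.
Proof.
move=> lt_kr x x_psegs; apply/negP.
move=> /(upper_rim_row s_partition s_nonempty (mem_psegs x_psegs)).
by have := psegs_start_row x_psegs; lia.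
Qed.

Definition upper_count_form (t : seq node) : Prop :=
  exists2 r, 0 < r <= k &
    exists m, count upper t = ((k, k) \in t) * (part s r - r + 1) + p * m.

Lemma upper_count_form_not_upper (t : seq node) :
  {in t, forall x, ~~ upper x} -> upper_count_form t.
Proof.
move=> not_upper; exists k.
  by rewrite leqnn andbT; case/andP: (kdiag_spec s_partition s_nonempty).
have diag_notin : (k, k) \notin t by apply/negP => /not_upper; rewrite /upper leqnn.
exists 0; rewrite (negbTE diag_notin) muln0 (eq_in_count (a2 := pred0)) ?count_pred0 //.
by move=> x /not_upper /negbTE.
Qed.

Lemma upper_count_form_cat r (rest : seq node) : 0 < r <= k ->
  let seg := take p (drop (start s r) rs) in
  {subset rest <= rs} -> {in rest, forall x, (last (0, 0) seg).1 < x.1} ->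
  upper_count_form rest -> upper_count_form (seg ++ rest).
Proof.
move=> r_range seg rest_rim rest_later [r' r'_range [m count_rest]].
have size_U := size_rim_upper s_partition s_nonempty r_range.
have count_seg : count upper seg = minn p (part s r - r + 1).
  by rewrite (count_upper_take_drop s_partition s_nonempty) size_U addKn.
have diag_seg : ((k, k) \in seg) = (part s r - r + 1 <= p).
  by rewrite (mem_diag_take_drop s_partition s_nonempty) size_U ?addKn //; lia.
rewrite /upper_count_form count_cat count_seg mem_cat diag_seg.
have [le_cp|lt_pc] := leqP (part s r - r + 1) p; last first.
  by exists r' => //; exists m.+1; rewrite count_rest /=; lia.
have diag_in_seg : (k, k) \in seg by rewrite diag_seg.
have le_k_last := pairwise_last_row (0, 0) (pairwise_take_drop_rim _ _ _) diag_in_seg.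
have rest_not_upper : count upper rest = 0.
  rewrite (eq_in_count (a2 := pred0)) ?count_pred0 // => x x_rest; apply/negP => up_x.
  have le_xk := upper_rim_row s_partition s_nonempty (rest_rim x x_rest) up_x.
  by have := rest_later x x_rest; rewrite ltnNge (leq_trans le_xk le_k_last).
by exists r => //; exists 0; rewrite rest_not_upper /=; lia.
Qed.

Lemma upper_count_form_psegs f r : 0 < r -> upper_count_form (psegs p s f (start s r)).
Proof.
elim: f r => [|f IHf] r r_gt0; first exact: upper_count_form_not_upper.
have [lt_kr|le_rk] := ltnP k r; first exact/upper_count_form_not_upper/psegs_not_upper.
have r_range : 0 < r <= k by rewrite r_gt0.
rewrite psegs_step /=; set seg := take p _.
case: ifP => _; first exact: upper_count_form_not_upper.
case: ifP => _.
  by rewrite -[seg]cats0; apply: upper_count_form_cat => //; apply: upper_count_form_not_upper.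
apply: upper_count_form_cat => // [x /mem_psegs // | x /psegs_start_row //|].
exact: IHf.
Qed.

End Segments.

Section RimStar.

Variables (p : nat) (s : seq nat).
Hypothesis s_partition : is_partition s.
Hypothesis s_nonempty : 0 < size s.
Local Notation k := (kdiag s).

Lemma mem_prim x : x \in prim p s -> x \in rim_seq s.
Proof. exact: mem_psegs. Qed.

Lemma prim_uniq : uniq (prim p s).
Proof. by rewrite /prim -(start_one s_partition s_nonempty); apply: psegs_uniq. Qed.

Lemma upper_count_form_prim : upper_count_form p s (prim p s).
Proof. by rewrite /prim -(start_one s_partition s_nonempty); apply: upper_count_form_psegs. Qed.

Lemma mem_U_set x : (x \in U_set p s) = (x \in prim p s) && upper x.
Proof. by rewrite mem_filter andbC. Qed.

Lemma mem_L_set_U_set x : x \in U_set p s -> (x \in L_set p s) = (x == (k, k)).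
Proof.
move=> x_U; apply/mapP/eqP => [[y y_U def_x]|def_x]; last by exists x; rewrite // def_x.
move: x_U y_U; rewrite def_x !mem_U_set /upper /=.
move=> /andP[_ le_yx] /andP[/mem_prim y_rim le_xy].
have diag_y : y.1 = y.2 by apply/eqP; rewrite eqn_leq le_xy le_yx.
case: y diag_y y_rim {def_x le_xy le_yx} => i j /= <-.
by move=> /(rim_diag s_partition s_nonempty) ->.
Qed.

Lemma mem_rim_star_diag i : ((i, i) \in rim_star p s) = (i == k) && ((k, k) \in prim p s).
Proof.
have -> : ((i, i) \in rim_star p s) = ((i, i) \in U_set p s).
  by rewrite mem_undup mem_cat orb_idr // => /mapP[[a b] ab_U [-> eq_ba]]; rewrite {1}eq_ba.
rewrite mem_U_set /upper leqnn andbT; apply/idP/andP => [ii_prim|[/eqP-> //]].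
by rewrite -(rim_diag s_partition s_nonempty (mem_prim ii_prim)) eqxx.
Qed.

Lemma a_star_add_diag : a_star p s + ((k, k) \in prim p s) = (count upper (prim p s)).*2.
Proof.
have U_uniq : uniq (U_set p s) := filter_uniq _ prim_uniq.
have L_uniq : uniq (L_set p s) by rewrite map_inj_uniq // => [[a b] [c d] [-> ->]].
have diag_U : ((k, k) \in U_set p s) = ((k, k) \in prim p s).
  by rewrite mem_U_set /upper leqnn andbT.
rewrite /a_star /rim_star undup_cat (undup_id U_uniq) (undup_id L_uniq) size_cat.
rewrite (eq_in_filter (a2 := predC1 (k, k))) => [|x /mem_L_set_U_set->//].
rewrite size_map -diag_U -(count_uniq_mem _ U_uniq) size_filter addnAC addnC.
by rewrite [count (predC1 _) _ + _]addnC count_predC -addnn /U_set size_filter.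
Qed.

Lemma a_star_form : exists2 r, 0 < r <= k &
  exists m, a_star p s = ((k, k) \in prim p s) * (part s r - r).*2.+1 + (p * m).*2.
Proof.
have [r r_range [m count_prim]] := upper_count_form_prim.
exists r => //; exists m; have := a_star_add_diag.
by rewrite count_prim; case: (_ \in _); lia.
Qed.

Lemma odd_a_star : odd (a_star p s) = ((k, k) \in prim p s).
Proof.
have [r _ [m ->]] := a_star_form.
by rewrite oddD odd_double addbF oddM /= odd_double andbT; case: (_ \in _).
Qed.

Lemma dvdn_a_star : self_conjugate s -> all (fun i => ~~ (p %| hook s i i)) (iota 1 k) ->
  (p %| a_star p s) = ((k, k) \notin prim p s).
Proof.
move=> s_selfconj hooks_coprime; have [r r_range [m ->]] := a_star_form.
have le_r_part : r <= part s r.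
  by case/andP: r_range => _ le_rk; rewrite (leq_trans le_rk) ?kdiag_le_part.
rewrite dvdn_addl; last by rewrite -muln2 -mulnA dvdn_mulr.
case: (_ \in _); rewrite ?mul0n ?dvdn0 // mul1n -hook_diag //.
by apply/negbTE/(allP hooks_coprime); rewrite mem_iota; lia.
Qed.

End RimStar.

Theorem corollary3p21 (p : nat) (s : seq nat) :
  prime p -> odd p -> 0 < size s -> BG_partition p s ->
  [<-> eps_star p s = 0;
       ~~ odd (a_star p s);
       (forall i : nat, (i, i) \notin rim_star p s);
       p %| a_star p s].
Proof.
move=> _ _ s_nonempty /and3P[s_partition s_selfconj hooks_coprime].
have odd_a := odd_a_star p s_partition s_nonempty.
have dvdn_a := dvdn_a_star s_partition s_nonempty s_selfconj hooks_coprime.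
have diag_free : (forall i, (i, i) \notin rim_star p s) <-> (kdiag s, kdiag s) \notin prim p s.
  split=> [/(_ (kdiag s))|diag_notin i]; rewrite mem_rim_star_diag // ?eqxx //.
  by rewrite (negbTE diag_notin) andbF.
tfae=> [|||].
- by rewrite /eps_star modn2; case: odd.
- by rewrite odd_a => /diag_free.
- by move/diag_free; rewrite dvdn_a.
- by rewrite dvdn_a -odd_a /eps_star modn2 => /negbTE->.
Qed.
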